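(* $\mathsf{GK(A_m)}$ admits cut-elimination: every sequent derivable in $\mathsf{GK(A_m)}$ has a $\mathsf{GK(A_m)}$-derivation containing no application of the rule (cut).
   Context: $\mathcal{L}_{A_m}^{\Box}$-formulas are built from a countably infinite set of variables using binary $\to$ and unary $\Box$. A sequent $\Gamma\Rightarrow\Delta$ is an ordered pair of finite multisets of formulas; $\Gamma,\Delta$ is multiset union, $n\Gamma$ is $\Gamma$ repeated $n$ times, $n[\varphi]$ is $n$ copies of $\varphi$, $\Box\Gamma=[\Box\varphi:\varphi\in\Gamma]$. The calculus $\mathsf{GK(A_m)}$ has rules: (id) $\Delta\Rightarrow\Delta$; (cut) from $\Gamma,\varphi\Rightarrow\Delta$ and $\Pi\Rightarrow\varphi,\Sigma$ infer $\Gamma,\Pi\Rightarrow\Sigma,\Delta$; (mix) from $\Gamma\Rightarrow\Delta$ and $\Pi\Rightarrow\Sigma$ infer $\Gamma,\Pi\Rightarrow\Sigma,\Delta$; (sc$_n$) from $n\Gamma\Rightarrow n\Delta$ infer $\Gamma\Rightarrow\Delta$ ($n\ge2$); ($\to\Rightarrow$) from $\Gamma,\psi\Rightarrow\varphi,\Delta$ infer $\Gamma,\varphi\to\psi\Rightarrow\Delta$; ($\Rightarrow\to$) from $\Gamma,\varphi\Rightarrow\psi,\Delta$ infer $\Gamma\Rightarrow\varphi\to\psi,\Delta$; ($\Box_n$) from $\Gamma\Rightarrow n[\varphi]$ infer $\Box\Gamma\Rightarrow n[\Box\varphi]$ ($n\ge0$). A derivation is a finite tree of sequents in which each node with its parents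 is a rule instance. *)

From HB Require Import structures.
From mathcomp Require Import all_boot.
Set Implicit Arguments. Unset Strict Implicit. Unset Printing Implicit Defensive.

Inductive form : Type :=
| Var : nat -> form
| Imp : form -> form -> form
| Box : form -> form.

Definition form_eq_dec (a b : form) : {a = b} + {a <> b}.
Proof. decide equality; exact: (fun m n : nat => decP (@eqP _ m n)). Defined.

Definition form_eqb (a b : form) : bool := if form_eq_dec a b then true else false.
Lemma form_eqP : Equality.axiom form_eqb.
Proof. by move=> a b; rewrite /form_eqb; case: form_eq_dec => h; constructor. Qed.
HB.instance Definition _ := hasDecEq.Build form form_eqP.

Definition mrep (n : nat) (G : seq form) : seq form := flatten (nseq n G).

(* A sequent is a pair of finite multisets, represented
   by lists considered up to permutation: every rule may conclude any sequent
   whose antecedent/succedent are permutations of the displayed ones.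
   The boolean [c] says whether the rule (cut) is available. *)
Inductive GK (c : bool) : seq form -> seq form -> Prop :=
| GK_id : forall D G' D', perm_eq G' D -> perm_eq D' D -> GK c G' D'
| GK_cut : forall G P S D phi G' D',
    c = true ->
    GK c (G ++ [:: phi]) D -> GK c P (phi :: S) ->
    perm_eq G' (G ++ P) -> perm_eq D' (S ++ D) -> GK c G' D'
| GK_mix : forall G D P S G' D',
    GK c G D -> GK c P S ->
    perm_eq G' (G ++ P) -> perm_eq D' (S ++ D) -> GK c G' D'
| GK_sc : forall n G D G' D', 2 <= n ->
    GK c (mrep n G) (mrep n D) ->
    perm_eq G' G -> perm_eq D' D -> GK c G' D'
| GK_impL : forall G D phi psi G' D',
    GK c (G ++ [:: psi]) (phi :: D) ->
    perm_eq G' (G ++ [:: Imp phi psi]) -> perm_eq D' D -> GK c G' D'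
| GK_impR : forall G D phi psi G' D',
    GK c (G ++ [:: phi]) (psi :: D) ->
    perm_eq G' G -> perm_eq D' (Imp phi psi :: D) -> GK c G' D'
| GK_box : forall n G phi G' D',
    GK c G (nseq n phi) ->
    perm_eq G' (map Box G) -> perm_eq D' (nseq n (Box phi)) -> GK c G' D'.

From mathcomp Require Import all_boot zify.
Set Implicit Arguments. Unset Strict Implicit. Unset Printing Implicit Defensive.

(* Cut is mix followed by cancellation (from G, x^a |- x^a, D infer G |- D), so it
   suffices that cancellation is admissible in the cut-free calculus; this is shown by
   induction on x.  For an implication it follows from the invertibility of the two
   implication rules and cancellation of the immediate subformulas.  For a variable or a
   box, induct on the derivation: every rule commutes with cancellation except mix, where
   occurrences of x on the left of one premise and on the right of the other must be cut
   against each other.  That cut is obtained as a multicut -- j copies of the left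
   derivation against k copies of the right one, removing jk occurrences of x, then (sc)
   divides the multiplicities back -- by induction on the left and then on the right
   derivation.  Its only principal case, two box rules, reduces to a multicut on the boxed
   formula, available by the outer induction since cancellation yields multicut. *)

Local Notation cutfree := (GK false).

Fixpoint nrem (k : nat) (x : form) (s : seq form) : seq form :=
  if k is k'.+1 then rem x (nrem k' x s) else s.

Lemma count_nrem y k x s : count_mem y (nrem k x s) = count_mem y s - (x == y) * k.
Proof.
elim: k => [|k IH]; first by rewrite muln0 subn0.
by rewrite /= count_mem_rem IH; case: (x == y) => /=; lia.
Qed.

Lemma count_mrep y n s : count_mem y (mrep n s) = n * count_mem y s.
Proof. by elim: n => [|n IH] //=; rewrite count_cat IH mulSn. Qed.

Lemma Box_inj : injective Box.
Proof. by move=> p q []. Qed.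

Lemma count_map_Box y s : count_mem y (map Box s) = if y is Box z then count_mem z s else 0.
Proof.
elim: s => [|p s IH] /=; first by case: y.
by rewrite {}IH; case: y => [v|c d|z] //=; rewrite (inj_eq Box_inj).
Qed.

Lemma map_Box_rem p s : map Box (rem p s) = rem (Box p) (map Box s).
Proof. by elim: s => //= q s IH; rewrite (inj_eq Box_inj); case: eqP => //= _; rewrite IH. Qed.

Lemma map_Box_nrem k p s : map Box (nrem k p s) = nrem k (Box p) (map Box s).
Proof. by elim: k => //= k IH; rewrite map_Box_rem IH. Qed.

Lemma map_mrep (f : form -> form) n s : map f (mrep n s) = mrep n (map f s).
Proof. by rewrite /mrep map_flatten map_nseq. Qed.

(* Multiset goals are decided pointwise: perm_eq becomes an equation between
   multiplicities at a fresh y.  The case y = x makes the hypotheses on the multiplicity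
   of x usable, the remaining tests (_ == y) are split blindly, and lia/nia finish. *)
Ltac counts_at y :=
  repeat match goal with H : is_true (perm_eq _ _) |- _ => move/permP/(_ (pred1 y)): H end;
  repeat match goal with H : is_true (_ <= _) |- _ => move: H end;
  repeat match goal with H : @eq nat _ _ |- _ => move: H end;
  do 2 rewrite /= ?(count_cat, count_nseq, count_mrep, count_nrem, count_mem_rem); rewrite /=.

Ltac split_eqs :=
  repeat match goal with |- context [(?a == ?b)] => case: (a == b) => /= end.

Ltac count_arith :=
  intros; rewrite ?(mul1n, muln1, mul0n, muln0, mulnBr, mulnDr, mulnA); first [lia | nia].

Ltac rewrite_nonimp :=
  try match goal with H : forall a b, (Imp a b == _) = false |- _ => rewrite ?H end.

Ltac count_solve x := counts_at x; rewrite ?eqxx /=; rewrite_nonimp; split_eqs; count_arith.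

Ltac perm_solve x :=
  let y := fresh "y" in let E := fresh "E" in let ne := fresh "ne" in
  apply/allP => y _; apply/eqP; counts_at y;
  case: (eqVneq x y) => [E|ne]; [try rewrite -{}E | rewrite ?(negbTE ne)];
  rewrite ?eqxx /=; rewrite_nonimp; split_eqs; count_arith.

Ltac perm_solve0 :=
  let y := fresh "y" in apply/allP => y _; apply/eqP; counts_at y; split_eqs; count_arith.

Lemma cutfree_refl G : cutfree G G.
Proof. exact: GK_id. Qed.

Lemma cutfree_perm G D G' D' : cutfree G D -> perm_eq G' G -> perm_eq D' D -> cutfree G' D'.
Proof. by move=> d hG hD; apply: (GK_mix d (cutfree_refl [::])); rewrite ?cats0. Qed.

Lemma cutfree_mix G1 D1 G2 D2 G D : cutfree G1 D1 -> cutfree G2 D2 ->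
  perm_eq G (G1 ++ G2) -> perm_eq D (D1 ++ D2) -> cutfree G D.
Proof. by move=> d1 d2 hG hD; apply: (GK_mix d1 d2 hG); rewrite (perm_trans hD) // perm_catC. Qed.

Lemma cutfree_mrep n G D : cutfree G D -> cutfree (mrep n G) (mrep n D).
Proof. by move=> d; elim: n => [|n IH]; [exact: cutfree_refl | exact: cutfree_mix d IH _ _]. Qed.

Lemma cutfree_sc n G D : 0 < n -> cutfree (mrep n G) (mrep n D) -> cutfree G D.
Proof.
case: n => [//|[|n]] _ d; last exact: (@GK_sc _ n.+2 G D).
by apply: (cutfree_perm d); rewrite /mrep /= cats0.
Qed.

Lemma cutfree_impL_nseq j G D a b :
  cutfree (G ++ nseq j b) (nseq j a ++ D) -> cutfree (G ++ nseq j (Imp a b)) D.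
Proof.
elim: j G D => [|j IH] G D d //=.
have d1 : cutfree ((G ++ nseq j b) ++ [:: b]) (a :: nseq j a ++ D).
  by apply: (cutfree_perm d); perm_solve0.
have d2 : cutfree ((G ++ [:: Imp a b]) ++ nseq j b) (nseq j a ++ D).
  by apply: GK_impL d1 _ _; perm_solve0.
by apply: (cutfree_perm (IH _ _ d2)); perm_solve0.
Qed.

Lemma cutfree_impR_nseq j G D a b :
  cutfree (G ++ nseq j a) (nseq j b ++ D) -> cutfree G (nseq j (Imp a b) ++ D).
Proof.
elim: j G D => [|j IH] G D d /=; first by rewrite cats0 in d.
have d1 : cutfree ((G ++ nseq j a) ++ [:: a]) (b :: nseq j b ++ D).
  by apply: (cutfree_perm d); perm_solve0.
have d2 : cutfree (G ++ nseq j a) (nseq j b ++ Imp a b :: D).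
  by apply: GK_impR d1 _ _; perm_solve0.
by apply: (cutfree_perm (IH _ _ d2)); perm_solve0.
Qed.

Lemma cutfree_Imp_succ k a b : cutfree (nseq k b) (nseq k (Imp a b) ++ nseq k a).
Proof. exact: cutfree_impR_nseq (cutfree_refl _). Qed.

Lemma cutfree_Imp_ante k a b : cutfree (nseq k a ++ nseq k (Imp a b)) (nseq k b).
Proof. exact: cutfree_impL_nseq (cutfree_refl _). Qed.

Lemma cutfree_Box G n p : cutfree G (nseq n p) -> cutfree (map Box G) (nseq n (Box p)).
Proof. by move=> d; apply: GK_box d _ _. Qed.

Lemma impL_inv a b G D : cutfree G D -> forall k, k <= count_mem (Imp a b) G ->
  cutfree (nrem k (Imp a b) G ++ nseq k b) (nseq k a ++ D).
Proof.
elim=> {G D}.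
- move=> Dl G' D' hG hD k hk.
  by apply: (cutfree_mix (cutfree_refl (nrem k (Imp a b) G')) (cutfree_Imp_succ k a b));
    perm_solve (Imp a b).
- by [].
- move=> G Dl P S G' D' _ IH1 _ IH2 hG hD k hk.
  have hkP : k - minn k (count_mem (Imp a b) G) <= count_mem (Imp a b) P.
    by count_solve (Imp a b).
  by apply: (cutfree_mix (IH1 (minn k (count_mem (Imp a b) G)) (geq_minr _ _)) (IH2 _ hkP));
    perm_solve (Imp a b).
- move=> n G Dl G' D' hn _ IH hG hD k hk.
  have hnk : n * k <= count_mem (Imp a b) (mrep n G) by count_solve (Imp a b).
  apply: (@cutfree_sc n); first lia.
  by apply: (cutfree_perm (IH _ hnk)); perm_solve (Imp a b).
- move=> G Dl phi psi G' D' _ IH hG hD k hk.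
  have [hkG | hGk] := leqP k (count_mem (Imp a b) G).
  + have hk' : k <= count_mem (Imp a b) (G ++ [:: psi]) by count_solve (Imp a b).
    have d : cutfree ((nrem k (Imp a b) G ++ nseq k b) ++ [:: psi]) (phi :: nseq k a ++ Dl).
      by apply: (cutfree_perm (IH _ hk')); perm_solve (Imp a b).
    by apply: GK_impL d _ _; perm_solve (Imp a b).
  + have [Ea Eb] : phi = a /\ psi = b.
      suff [] : Imp phi psi = Imp a b by [].
      by apply/eqP; apply: contraTT hk => /negbTE ne; counts_at (Imp a b); rewrite ne; count_arith.
    subst phi psi.
    case: k hk hGk => // k hk hGk.
    have hk' : k <= count_mem (Imp a b) (G ++ [:: b]) by count_solve (Imp a b).
    by apply: (cutfree_perm (IH _ hk')); perm_solve (Imp a b).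
- move=> G Dl phi psi G' D' _ IH hG hD k hk.
  have hk' : k <= count_mem (Imp a b) (G ++ [:: phi]) by count_solve (Imp a b).
  have d : cutfree ((nrem k (Imp a b) G ++ nseq k b) ++ [:: phi]) (psi :: nseq k a ++ Dl).
    by apply: (cutfree_perm (IH _ hk')); perm_solve (Imp a b).
  by apply: GK_impR d _ _; perm_solve (Imp a b).
- move=> n G phi G' D' d _ hG hD k.
  rewrite (permP hG) count_map_Box leqn0 => /eqP ->.
  by apply: (cutfree_perm (cutfree_Box d)); rewrite //= cats0.
Qed.

Lemma impR_inv a b G D : cutfree G D -> forall k, k <= count_mem (Imp a b) D ->
  cutfree (G ++ nseq k a) (nseq k b ++ nrem k (Imp a b) D).
Proof.
elim=> {G D}.
- move=> Dl G' D' hG hD k hk.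
  by apply: (cutfree_mix (cutfree_refl (nrem k (Imp a b) D')) (cutfree_Imp_ante k a b));
    perm_solve (Imp a b).
- by [].
- move=> G Dl P S G' D' _ IH1 _ IH2 hG hD k hk.
  have hkS : k - minn k (count_mem (Imp a b) Dl) <= count_mem (Imp a b) S.
    by count_solve (Imp a b).
  by apply: (cutfree_mix (IH1 (minn k (count_mem (Imp a b) Dl)) (geq_minr _ _)) (IH2 _ hkS));
    perm_solve (Imp a b).
- move=> n G Dl G' D' hn _ IH hG hD k hk.
  have hnk : n * k <= count_mem (Imp a b) (mrep n Dl) by count_solve (Imp a b).
  apply: (@cutfree_sc n); first lia.
  by apply: (cutfree_perm (IH _ hnk)); perm_solve (Imp a b).
- move=> G Dl phi psi G' D' _ IH hG hD k hk.
  have hk' : k <= count_mem (Imp a b) (phi :: Dl) by count_solve (Imp a b).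
  have d : cutfree ((G ++ nseq k a) ++ [:: psi]) (phi :: nseq k b ++ nrem k (Imp a b) Dl).
    by apply: (cutfree_perm (IH _ hk')); perm_solve (Imp a b).
  by apply: GK_impL d _ _; perm_solve (Imp a b).
- move=> G Dl phi psi G' D' _ IH hG hD k hk.
  have [hkD | hDk] := leqP k (count_mem (Imp a b) Dl).
  + have hk' : k <= count_mem (Imp a b) (psi :: Dl) by count_solve (Imp a b).
    have d : cutfree ((G ++ nseq k a) ++ [:: phi]) (psi :: nseq k b ++ nrem k (Imp a b) Dl).
      by apply: (cutfree_perm (IH _ hk')); perm_solve (Imp a b).
    by apply: GK_impR d _ _; perm_solve (Imp a b).
  + have [Ea Eb] : phi = a /\ psi = b.
      suff [] : Imp phi psi = Imp a b by [].
      apply/eqP; apply: contraTT hk => /negbTE ne.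
      by counts_at (Imp a b); rewrite ne; count_arith.
    subst phi psi.
    case: k hk hDk => // k hk hDk.
    have hk' : k <= count_mem (Imp a b) (b :: Dl) by count_solve (Imp a b).
    by apply: (cutfree_perm (IH _ hk')); perm_solve (Imp a b).
- move=> n G phi G' D' d _ hG hD k.
  rewrite (permP hD) count_nseq /= mul0n leqn0 => /eqP->.
  by apply: (cutfree_perm (cutfree_Box d)); rewrite //= cats0.
Qed.

Definition cancels x G D := forall a, a <= count_mem x G -> a <= count_mem x D ->
  cutfree (nrem a x G) (nrem a x D).

Definition cuts x G D P S := forall k j, k <= count_mem x G -> j <= count_mem x S ->
  cutfree (mrep j (nrem k x G) ++ mrep k P) (mrep k (nrem j x S) ++ mrep j D).

Definition cancel_admissible x := forall G D, cutfree G D -> cancels x G D.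

Definition multicut_admissible x := forall G D P S, cutfree G D -> cutfree P S -> cuts x G D P S.

Definition box_cancel_admissible x := forall G n p,
  cutfree G (nseq n p) -> cancels x (map Box G) (nseq n (Box p)).

Definition box_multicut_admissible x := forall G n p P S,
  cutfree G (nseq n p) -> cutfree P S -> cuts x (map Box G) (nseq n (Box p)) P S.

Lemma cancels_perm x G D G' D' : perm_eq G' G -> perm_eq D' D -> cancels x G D -> cancels x G' D'.
Proof.
move=> hG hD c a hG' hD'; rewrite (permP hG) (permP hD) in hG' hD'.
by apply: (cutfree_perm (c a hG' hD')); perm_solve x.
Qed.

Lemma cuts_perm x G D P S G' D' P' S' : perm_eq G' G -> perm_eq D' D ->
  perm_eq P' P -> perm_eq S' S -> cuts x G D P S -> cuts x G' D' P' S'.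
Proof.
move=> hG hD hP hS c k j hk hj; rewrite (permP hG) (permP hS) in hk hj.
by apply: (cutfree_perm (c k j hk hj)); perm_solve x.
Qed.

Lemma multicut_of_cancel x : cancel_admissible x -> multicut_admissible x.
Proof.
move=> cx G D P S dL dR k j hk hj.
have d := cutfree_mix (cutfree_mrep j dL) (cutfree_mrep k dR) (perm_refl _) (perm_refl _).
have hl : j * k <= count_mem x (mrep j G ++ mrep k P) by count_solve x.
have hr : j * k <= count_mem x (mrep j D ++ mrep k S) by count_solve x.
by apply: (cutfree_perm (cx _ _ d _ hl hr)); perm_solve x.
Qed.

Lemma cut_of_multicut x G D P S c : multicut_admissible x -> cutfree G D -> cutfree P S ->
  c <= count_mem x G -> c <= count_mem x S -> cutfree (nrem c x G ++ P) (nrem c x S ++ D).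
Proof.
move=> mx dL dR hG hS; case: c hG hS => [|c] hG hS.
  by apply: (cutfree_mix dL dR); rewrite // perm_catC.
apply: (@cutfree_sc c.+1) => //.
by apply: (cutfree_perm (mx _ _ _ _ dL dR _ _ hG hS)); perm_solve x.
Qed.

Lemma cancel_nseq x G D k : cancel_admissible x ->
  cutfree (G ++ nseq k x) (D ++ nseq k x) -> cutfree G D.
Proof.
move=> cx d; have hl : k <= count_mem x (G ++ nseq k x) by count_solve x.
have hr : k <= count_mem x (D ++ nseq k x) by count_solve x.
by apply: (cutfree_perm (cx _ _ d _ hl hr)); perm_solve x.
Qed.

Lemma cancels_mix x G D P S : multicut_admissible x ->
  cancels x G D -> cancels x P S -> cancels x (G ++ P) (S ++ D).
Proof.
move=> mx cGD cPS a hl hr.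
move Ea1 : (minn a (minn (count_mem x G) (count_mem x D))) => a1.
move Ea2 : (minn (a - a1) (minn (count_mem x P) (count_mem x S))) => a2.
have d1 : cutfree (nrem a1 x G) (nrem a1 x D) by apply: cGD; lia.
have d2 : cutfree (nrem a2 x P) (nrem a2 x S) by apply: cPS; lia.
have [hGD | hDG] := leqP (count_mem x G) (count_mem x D).
- have hP : a - a1 - a2 <= count_mem x (nrem a2 x P) by count_solve x.
  have hD : a - a1 - a2 <= count_mem x (nrem a1 x D) by count_solve x.
  by apply: (cutfree_perm (cut_of_multicut mx d2 d1 hP hD)); perm_solve x.
- have hG : a - a1 - a2 <= count_mem x (nrem a1 x G) by count_solve x.
  have hS : a - a1 - a2 <= count_mem x (nrem a2 x S) by count_solve x.
  by apply: (cutfree_perm (cut_of_multicut mx d1 d2 hG hS)); perm_solve x.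
Qed.

Lemma cancel_of_multicut x : (forall a b, (Imp a b == x) = false) ->
  multicut_admissible x -> box_cancel_admissible x -> cancel_admissible x.
Proof.
move=> nimp mx bx G D; elim=> {G D}.
- move=> Dl G' D' hG hD; apply: cancels_perm hG hD _ => a _ _; exact: cutfree_refl.
- by [].
- move=> G Dl P S G' D' _ cGD _ cPS hG hD; apply: cancels_perm hG hD _.
  exact: cancels_mix.
- move=> n G Dl G' D' hn _ c hG hD; apply: cancels_perm hG hD _ => a hl hr.
  have hl' : n * a <= count_mem x (mrep n G) by count_solve x.
  have hr' : n * a <= count_mem x (mrep n Dl) by count_solve x.
  apply: (@cutfree_sc n); first lia.
  by apply: (cutfree_perm (c _ hl' hr')); perm_solve x.
- move=> G Dl phi psi G' D' _ c hG hD; apply: cancels_perm hG hD _ => a hl hr.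
  have hl' : a <= count_mem x (G ++ [:: psi]) by count_solve x.
  have hr' : a <= count_mem x (phi :: Dl) by count_solve x.
  have d : cutfree (nrem a x G ++ [:: psi]) (phi :: nrem a x Dl).
    by apply: (cutfree_perm (c _ hl' hr')); perm_solve x.
  by apply: GK_impL d _ _; perm_solve x.
- move=> G Dl phi psi G' D' _ c hG hD; apply: cancels_perm hG hD _ => a hl hr.
  have hl' : a <= count_mem x (G ++ [:: phi]) by count_solve x.
  have hr' : a <= count_mem x (psi :: Dl) by count_solve x.
  have d : cutfree (nrem a x G ++ [:: phi]) (psi :: nrem a x Dl).
    by apply: (cutfree_perm (c _ hl' hr')); perm_solve x.
  by apply: GK_impR d _ _; perm_solve x.
- move=> n G phi G' D' d _ hG hD; apply: cancels_perm hG hD _; exact: bx.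
Qed.

Lemma multicut_of_box_multicut x : (forall a b, (Imp a b == x) = false) ->
  box_multicut_admissible x -> multicut_admissible x.
Proof.
move=> nimp bx G D P S dL dR; have hP := perm_refl P; have hS := perm_refl S.
elim: dL => {G D}.
- move=> Dl G' D' hG hD; apply: cuts_perm hG hD hP hS _ => k j hk hj.
  by apply: (cutfree_mix (cutfree_refl (mrep j (nrem k x Dl))) (cutfree_mrep k dR)); perm_solve x.
- by [].
- move=> G Dl Q T G' D' _ c1 _ c2 hG hD; apply: cuts_perm hG hD hP hS _ => k j hk hj.
  have hkQ : k - minn k (count_mem x G) <= count_mem x Q by count_solve x.
  have d1 := c1 (minn k (count_mem x G)) j (geq_minr _ _) hj.
  by apply: (cutfree_mix d1 (c2 _ _ hkQ hj)); perm_solve x.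
- move=> n G Dl G' D' hn _ c hG hD; apply: cuts_perm hG hD hP hS _ => k j hk hj.
  have hnk : n * k <= count_mem x (mrep n G) by count_solve x.
  apply: (@cutfree_sc n); first lia.
  by apply: (cutfree_perm (c _ _ hnk hj)); perm_solve x.
- move=> G Dl phi psi G' D' _ c hG hD; apply: cuts_perm hG hD hP hS _ => k j hk hj.
  have hk' : k <= count_mem x (G ++ [:: psi]) by count_solve x.
  have d : cutfree ((mrep j (nrem k x G) ++ mrep k P) ++ nseq j psi)
                   (nseq j phi ++ mrep k (nrem j x S) ++ mrep j Dl).
    by apply: (cutfree_perm (c _ _ hk' hj)); perm_solve x.
  by apply: (cutfree_perm (cutfree_impL_nseq d)); perm_solve x.
- move=> G Dl phi psi G' D' _ c hG hD; apply: cuts_perm hG hD hP hS _ => k j hk hj.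
  have hk' : k <= count_mem x (G ++ [:: phi]) by count_solve x.
  have d : cutfree ((mrep j (nrem k x G) ++ mrep k P) ++ nseq j phi)
                   (nseq j psi ++ mrep k (nrem j x S) ++ mrep j Dl).
    by apply: (cutfree_perm (c _ _ hk' hj)); perm_solve x.
  by apply: (cutfree_perm (cutfree_impR_nseq d)); perm_solve x.
- move=> n G phi G' D' d _ hG hD; apply: cuts_perm hG hD hP hS _; exact: bx.
Qed.

Lemma cuts_Box_Box phi chi G n psi H m : multicut_admissible phi ->
  cutfree G (nseq n psi) -> cutfree H (nseq m chi) ->
  cuts (Box phi) (map Box G) (nseq n (Box psi)) (map Box H) (nseq m (Box chi)).
Proof.
move=> mphi dG dH k [|j] hk hj.
  by apply: (cutfree_perm (cutfree_mrep k (cutfree_Box dH))); perm_solve (Box phi).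
rewrite count_nseq /= (inj_eq Box_inj) in hj.
have Echi : chi = phi by apply/eqP; apply: contraTT hj => /negbTE->; rewrite mul0n.
subst chi; rewrite eqxx mul1n in hj.
have hkG : k <= count_mem phi G by rewrite count_map_Box in hk.
have hm : m <= count_mem phi (nseq m phi) by rewrite count_nseq /= eqxx mul1n.
have d : cutfree (mrep m (nrem k phi G) ++ mrep k H) (nseq (m * n) psi).
  by apply: (cutfree_perm (mphi _ _ _ _ dG dH _ _ hkG hm)); perm_solve phi.
have dB := cutfree_Box d; rewrite map_cat !map_mrep map_Box_nrem in dB.
(* m copies of the goal = j+1 copies of dB plus k(m-j-1) copies of the right premise. *)
apply: (@cutfree_sc m); first lia.
have dR := cutfree_mrep (k * (m - j.+1)) (cutfree_Box dH).
by apply: (cutfree_perm (cutfree_mix (cutfree_mrep j.+1 dB) dR (perm_refl _) (perm_refl _)));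
  perm_solve (Box phi).
Qed.

Lemma box_multicut_Box phi : multicut_admissible phi -> box_multicut_admissible (Box phi).
Proof.
move=> mphi G n psi P S dG dR.
have hG := perm_refl (map Box G); have hN := perm_refl (nseq n (Box psi)).
elim: dR => {P S}.
- move=> T P' S' hP hS; apply: cuts_perm hG hN hP hS _ => k j hk hj.
  have dB := cutfree_mrep j (cutfree_Box dG).
  by apply: (cutfree_mix dB (cutfree_refl (mrep k (nrem j (Box phi) T)))); perm_solve (Box phi).
- by [].
- move=> Q T P S P' S' _ c1 _ c2 hP hS; apply: cuts_perm hG hN hP hS _ => k j hk hj.
  have hjS : j - minn j (count_mem (Box phi) T) <= count_mem (Box phi) S.
    by count_solve (Box phi).
  have d1 := c1 k (minn j (count_mem (Box phi) T)) hk (geq_minr _ _).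
  by apply: (cutfree_mix d1 (c2 _ _ hk hjS)); perm_solve (Box phi).
- move=> m Q T P' S' hm _ c hP hS; apply: cuts_perm hG hN hP hS _ => k j hk hj.
  have hmj : m * j <= count_mem (Box phi) (mrep m T) by count_solve (Box phi).
  apply: (@cutfree_sc m); first lia.
  by apply: (cutfree_perm (c _ _ hk hmj)); perm_solve (Box phi).
- move=> Q T a b P' S' _ c hP hS; apply: cuts_perm hG hN hP hS _ => k j hk hj.
  have hj' : j <= count_mem (Box phi) (a :: T) by count_solve (Box phi).
  have d : cutfree ((mrep j (nrem k (Box phi) (map Box G)) ++ mrep k Q) ++ nseq k b)
                   (nseq k a ++ mrep k (nrem j (Box phi) T) ++ mrep j (nseq n (Box psi))).
    by apply: (cutfree_perm (c _ _ hk hj')); perm_solve (Box phi).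
  by apply: (cutfree_perm (cutfree_impL_nseq d)); perm_solve (Box phi).
- move=> Q T a b P' S' _ c hP hS; apply: cuts_perm hG hN hP hS _ => k j hk hj.
  have hj' : j <= count_mem (Box phi) (b :: T) by count_solve (Box phi).
  have d : cutfree ((mrep j (nrem k (Box phi) (map Box G)) ++ mrep k Q) ++ nseq k a)
                   (nseq k b ++ mrep k (nrem j (Box phi) T) ++ mrep j (nseq n (Box psi))).
    by apply: (cutfree_perm (c _ _ hk hj')); perm_solve (Box phi).
  by apply: (cutfree_perm (cutfree_impR_nseq d)); perm_solve (Box phi).
- move=> m H chi P' S' dH _ hP hS; apply: cuts_perm hG hN hP hS _.
  exact: cuts_Box_Box.
Qed.

Lemma box_cancel_Box p : cancel_admissible p -> box_cancel_admissible (Box p).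
Proof.
move=> cp G n q d [|a] hl hr; first exact: cutfree_Box d.
rewrite count_nseq /= (inj_eq Box_inj) in hr.
have Eq : q = p by apply/eqP; apply: contraTT hr => /negbTE->; rewrite mul0n.
subst q; rewrite eqxx mul1n in hr; rewrite count_map_Box in hl.
have hr' : a.+1 <= count_mem p (nseq n p) by rewrite count_nseq /= eqxx mul1n.
have d' : cutfree (nrem a.+1 p G) (nseq (n - a.+1) p).
  by apply: (cutfree_perm (cp _ _ d _ hl hr')); perm_solve p.
by rewrite -map_Box_nrem; apply: (cutfree_perm (cutfree_Box d')) => //; perm_solve (Box p).
Qed.

Lemma box_cancel_Var v : box_cancel_admissible (Var v).
Proof. by move=> G n p d a; rewrite count_map_Box leqn0 => /eqP-> _; exact: cutfree_Box. Qed.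

Lemma box_multicut_Var v : box_multicut_admissible (Var v).
Proof.
move=> G n p P S d _ k j; rewrite count_map_Box leqn0 => /eqP-> _.
by apply: (cutfree_perm (cutfree_mrep j (cutfree_Box d))); perm_solve0.
Qed.

Lemma cancel_Imp a b : cancel_admissible a -> cancel_admissible b -> cancel_admissible (Imp a b).
Proof.
move=> ca cb G D d k hl hr.
have d1 := impL_inv d hl.
have hr' : k <= count_mem (Imp a b) (nseq k a ++ D) by count_solve (Imp a b).
have d2 : cutfree ((nrem k (Imp a b) G ++ nseq k b) ++ nseq k a)
                  ((nrem k (Imp a b) D ++ nseq k b) ++ nseq k a).
  by apply: (cutfree_perm (impR_inv d1 hr')); perm_solve (Imp a b).
exact: cancel_nseq cb (cancel_nseq ca d2).
Qed.

Lemma cancel_admissible_all x : cancel_admissible x.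
Proof.
elim: x => [v | a ca b cb | p cp].
- have mv := @multicut_of_box_multicut (Var v) (fun _ _ => erefl) (@box_multicut_Var v).
  exact: @cancel_of_multicut (Var v) (fun _ _ => erefl) mv (@box_cancel_Var v).
- exact: cancel_Imp.
- have mp := @multicut_of_box_multicut (Box p) (fun _ _ => erefl)
                                        (box_multicut_Box (multicut_of_cancel cp)).
  exact: @cancel_of_multicut (Box p) (fun _ _ => erefl) mp (box_cancel_Box cp).
Qed.

Theorem theorem4p6 (G D : seq form) : GK true G D -> GK false G D.
Proof.
elim=> {G D}.
- exact: GK_id.
- move=> G P S D phi G' D' _ _ dL _ dR hG hD.
  have mphi : multicut_admissible phi by apply/multicut_of_cancel/cancel_admissible_all.
  have hl : 1 <= count_mem phi (G ++ [:: phi]) by count_solve phi.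
  have hr : 1 <= count_mem phi (phi :: S) by count_solve phi.
  by apply: (cutfree_perm (cut_of_multicut mphi dL dR hl hr)); perm_solve phi.
- by move=> G D P S G' D' _ d1 _ d2; apply: GK_mix d1 d2.
- by move=> n G D G' D' hn _ d; apply: GK_sc hn d.
- by move=> G D phi psi G' D' _ d; apply: GK_impL d.
- by move=> G D phi psi G' D' _ d; apply: GK_impR d.
- by move=> n G phi G' D' _ d; apply: GK_box d.
Qed.
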